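(* Let $R$ be a unital associative ring and $$A=\begin{pmatrix}1&1&1\\1&a&b\\1&c&d\end{pmatrix}\in\widehat{\cal S}.$$ Then $\Phi^2(A)=\omega^{-1}\Phi^{-1}(A)\omega$, where $$\omega=\bigl[d(d-b)^{-1}-c(c-a)^{-1}\bigr]^{-1}\bigl[d(d-b)^{-1}(b-1)-c(c-a)^{-1}(a-1)\bigr]\bigl[(d-c)^{-1}(c-1)-(b-a)^{-1}(a-1)\bigr].$$
   Context: $R^*$: units of $R$. $M_3^*(R)$: invertible $3\times3$ matrices; $M_3^\star(R)$: matrices with all entries in $R^*$. $J_1(M)=M^{-1}$ on $M_3^*(R)$; $J_2(M)_{jk}=(M_{kj})^{-1}$ on $M_3^\star(R)$; $J=J_2\circ J_1$, $J^{-1}=J_1\circ J_2$, where $g\circ f$ has domain $\{x\in{\rm dom}(f):f(x)\in{\rm dom}(g)\}$. $\widehat M_3(R)$: matrices whose first row and column consist of $1$'s. For $A=\{a_{j,k}\}\in M_3^\star(R)$: $\Lambda^L(A)_{j,k}=a_{1,1}a_{j,1}^{-1}a_{j,k}a_{1,k}^{-1}$, $\Lambda^R(A)_{j,k}=a_{j,1}^{-1}a_{j,k}a_{1,k}^{-1}a_{1,1}$. $\Phi(A)=J_2(\Lambda^L(A^{-1}))$ with ${\rm dom}(\Phi)={\rm dom}(J)\cap\widehat M_3(R)\cap M_3^\star(R)$; $\Phi^{-1}(A)=\Lambda^R(J^{-1}(A))$. ${\cal S}=\{M\in M_3(R):$ all square submatrices of $M$ are invertible and $J_2(M)$ is invertible$\}$,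 $\widehat{\cal S}={\cal S}\cap\widehat M_3(R)$. $\omega^{-1}B\omega$ denotes the matrix with entries $\omega^{-1}B_{jk}\omega$. *)

From HB Require Import structures.
From mathcomp Require Import all_boot all_order all_algebra.
From Stdlib Require Import ClassicalEpsilon.
Set Implicit Arguments. Unset Strict Implicit. Unset Printing Implicit Defensive.
Import GRing.Theory.
Local Open Scope ring_scope.

Section Defs.
Variable R : unitRingType.

Definition mx_invertible (n : nat) (M : 'M[R]_n) : Prop :=
  exists B : 'M[R]_n, M *m B = 1%:M /\ B *m M = 1%:M.

(* the inverse M^{-1} (meaningful when M is invertible) *)
Definition minv (n : nat) (M : 'M[R]_n) : 'M[R]_n :=
  epsilon (inhabits M) (fun B => M *m B = 1%:M /\ B *m M = 1%:M).

Definition all_units (M : 'M[R]_3) : Prop := forall j k, M j k \is a GRing.unit.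

(* J_1 = minv on M_3^*(R) ; J_2 on M_3^star(R) *)
Definition J2 (M : 'M[R]_3) : 'M[R]_3 := \matrix_(j, k) (M k j)^-1.

Definition domJ (M : 'M[R]_3) : Prop := mx_invertible M /\ all_units (minv M).
Definition J (M : 'M[R]_3) : 'M[R]_3 := J2 (minv M).
Definition domJinv (M : 'M[R]_3) : Prop := all_units M /\ mx_invertible (J2 M).
Definition Jinv (M : 'M[R]_3) : 'M[R]_3 := minv (J2 M).

Definition is_hat (M : 'M[R]_3) : Prop := forall k, M 0 k = 1 /\ M k 0 = 1.

Definition LambdaL (A : 'M[R]_3) : 'M[R]_3 :=
  \matrix_(j, k) (A 0 0 * (A j 0)^-1 * A j k * (A 0 k)^-1).
Definition LambdaR (A : 'M[R]_3) : 'M[R]_3 :=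
  \matrix_(j, k) ((A j 0)^-1 * A j k * (A 0 k)^-1 * A 0 0).

Definition domPhi (A : 'M[R]_3) : Prop := domJ A /\ is_hat A /\ all_units A.
Definition Phi (A : 'M[R]_3) : 'M[R]_3 := J2 (LambdaL (minv A)).

(* Phi^{-1}(A) = Lambda^R(J^{-1}(A)): defined when A in dom(J^{-1}) and
   J^{-1}(A) in M_3^star(R) (the domain of Lambda^R) *)
Definition domPhiinv (A : 'M[R]_3) : Prop := domJinv A /\ all_units (Jinv A).
Definition Phiinv (A : 'M[R]_3) : 'M[R]_3 := LambdaR (Jinv A).

Definition in_S (M : 'M[R]_3) : Prop :=
  (forall (k : nat) (f g : 'I_k -> 'I_3), injective f -> injective g ->
     mx_invertible (\matrix_(i, j) M (f i) (g j)))
  /\ all_units M /\ mx_invertible (J2 M).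

Definition in_Shat (M : 'M[R]_3) : Prop := in_S M /\ is_hat M.

Definition hatmx (a b c d : R) : 'M[R]_3 :=
  \matrix_(i, j) match nat_of_ord i, nat_of_ord j with
                 | 1%N, 1%N => a | 1%N, 2%N => b
                 | 2%N, 1%N => c | 2%N, 2%N => d
                 | _, _ => 1 end.

Definition conj_by (w : R) (B : 'M[R]_3) : 'M[R]_3 := \matrix_(j, k) (w^-1 * B j k * w).

Definition omega (a b c d : R) : R :=
  (d * (d - b)^-1 - c * (c - a)^-1)^-1
  * (d * (d - b)^-1 * (b - 1) - c * (c - a)^-1 * (a - 1))
  * ((d - c)^-1 * (c - 1) - (b - a)^-1 * (a - 1)).

End Defs.

From mathcomp Require Import all_boot all_order all_algebra.
From Stdlib Require Import PeanoNat ClassicalEpsilon.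
From Stdlib Require List.
Set Implicit Arguments. Unset Strict Implicit. Unset Printing Implicit Defensive.
Import GRing.Theory.
Local Open Scope ring_scope.

(* Every matrix in the theorem is a hat matrix whose lower right block is an explicit
   noncommutative rational function of a, b, c, d.  Write (u, v)^T = B^-1 (1, 1)^T for the
   lower right block B of A and s = u + v - 1.  Then the lower right block of Phi(A) is
   (1 + (1 - d^-1)^-1 s, 1 + (1 - c^-1)^-1 s; 1 + (1 - b^-1)^-1 s, 1 + (1 - a^-1)^-1 s),
   Phi^-1(A) = Lambda^R((J2 A)^-1) is computed the same way from the row sums of the inverse
   of the lower right block of J2 A, and omega = W s with W = (b-1)(b-a)^-1 a - (d-1)(d-c)^-1 c.
   The theorem then reduces to four identities in a free ring, which are checked by a
   reflexive noncommutative Knuth-Bendix completion procedure.  The invertibility side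
   conditions come from a small calculus of 2x2 inverses: Schur complements, row and column
   swaps, scaling by units and the 2x2 case of J2. *)

(* A sound, incomplete decision procedure for equations in a noncommutative ring: the
   hypotheses are oriented into rewrite rules on words, completed for a bounded number of
   rounds, and both sides of the goal are reduced to normal form. *)
Module NCRing.

Definition word := seq nat.
Definition monomial := (int * word)%type.
Definition ncpoly := seq monomial.

Fixpoint lex_cmp (u v : word) : comparison :=
  match u, v with
  | [::], [::] => Eq
  | [::], _ => Lt
  | _, [::] => Gt
  | x :: u', y :: v' => match Nat.compare x y with Eq => lex_cmp u' v' | c => c end
  end.

Definition word_cmp (u v : word) : comparison :=
  match Nat.compare (size u) (size v) with Eq => lex_cmp u v | c => c end.

(* Polynomials are kept sorted by decreasing [word_cmp], without zero coefficients. *)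
Fixpoint insert (t : monomial) (p : ncpoly) : ncpoly :=
  match p with
  | [::] => if t.1 == 0 then [::] else [:: t]
  | s :: p' => match word_cmp t.2 s.2 with
               | Gt => if t.1 == 0 then p else t :: p
               | Eq => let c := t.1 + s.1 in if c == 0 then p' else (c, s.2) :: p'
               | Lt => s :: insert t p'
               end
  end.

Definition normalize (p : ncpoly) : ncpoly := foldr insert [::] p.
Definition popp (p : ncpoly) : ncpoly := [seq (- t.1, t.2) | t <- p].
Definition pmul (p q : ncpoly) : ncpoly :=
  normalize (flatten [seq [seq (t.1 * s.1, t.2 ++ s.2) | s <- q] | t <- p]).
Definition psub (p q : ncpoly) : ncpoly := normalize (p ++ popp q).
Definition pword (w : word) : ncpoly := [:: (1, w)].

Inductive expr :=
  Atom of nat | Zero | One | Add of expr & expr | Opp of expr | Mul of expr & expr.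

Fixpoint poly_of (e : expr) : ncpoly :=
  match e with
  | Atom i => [:: (1, [:: i])]
  | Zero => [::]
  | One => [:: (1, [::])]
  | Add x y => normalize (poly_of x ++ poly_of y)
  | Opp x => popp (poly_of x)
  | Mul x y => pmul (poly_of x) (poly_of y)
  end.

(* A rule [(w, p)] rewrites the word [w] to the polynomial [p]. *)
Definition rule := (word * ncpoly)%type.

Fixpoint strip_prefix (l w : word) : option word :=
  match l, w with
  | [::], _ => Some w
  | x :: l', y :: w' => if Nat.eqb x y then strip_prefix l' w' else None
  | _, _ => None
  end.

Fixpoint factor (l w : word) : option (word * word) :=
  match strip_prefix l w with
  | Some s => Some ([::], s)
  | None => match w with
            | [::] => None
            | y :: w' => if factor l w' is Some (pre, s) then Some (y :: pre, s) else None
            end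
  end.

Definition embed (c : int) (pre suf : word) (p : ncpoly) : ncpoly :=
  [seq (c * t.1, pre ++ t.2 ++ suf) | t <- p].

Fixpoint rewrite_monomial (rs : seq rule) (t : monomial) : option ncpoly :=
  match rs with
  | [::] => None
  | r :: rs' => if factor r.1 t.2 is Some (pre, suf) then Some (embed t.1 pre suf r.2)
                else rewrite_monomial rs' t
  end.

Fixpoint rewrite_step (rs : seq rule) (p : ncpoly) : option ncpoly :=
  match p with
  | [::] => None
  | t :: p' => match rewrite_monomial rs t with
               | Some q => Some (normalize (p' ++ q))
               | None => if rewrite_step rs p' is Some q then Some (normalize (t :: q)) else None
               end
  end.

Fixpoint reduce (fuel : nat) (rs : seq rule) (p : ncpoly) : ncpoly :=
  if fuel is fuel'.+1 then
    if rewrite_step rs p is Some q then reduce fuel' rs q else p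
  else p.

Definition orient (e : ncpoly) : option rule :=
  match e with
  | (c, w) :: rest => if c == 1 then Some (w, popp rest)
                      else if c == -1 then Some (w, rest) else None
  | [::] => None
  end.

Definition add_rule (fuel : nat) (rs : seq rule) (e : ncpoly) : seq rule :=
  if orient (reduce fuel rs e) is Some r then rcons rs r else rs.

Definition add_rule_upto (fuel deg : nat) (rs : seq rule) (e : ncpoly) : seq rule :=
  if orient (reduce fuel rs e) is Some r then
    if (size r.1 <= deg)%N then rcons rs r else rs
  else rs.

Definition overlap (r1 r2 : rule) (k : nat) : option ncpoly :=
  let n := size r1.1 in
  if drop (n - k) r1.1 == take k r2.1 then
    Some (psub (pmul r1.2 (pword (drop k r2.1))) (pmul (pword (take (n - k) r1.1)) r2.2))
  else None.

Definition inclusion (r1 r2 : rule) : option ncpoly :=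
  if r1.1 == r2.1 then None else
  if factor r2.1 r1.1 is Some (pre, suf) then
    Some (psub r1.2 (pmul (pmul (pword pre) r2.2) (pword suf)))
  else None.

Definition critical_pairs (r1 r2 : rule) : seq ncpoly :=
  pmap id ([seq overlap r1 r2 k | k <- iota 1 (minn (size r1.1) (size r2.1)).-1]
           ++ [:: inclusion r1 r2]).

Definition completion_round (fuel deg : nat) (rs : seq rule) : seq rule :=
  foldl (fun acc pr => foldl (add_rule_upto fuel deg) acc (critical_pairs pr.1 pr.2))
        rs [seq (r1, r2) | r1 <- rs, r2 <- rs].

Fixpoint complete (rounds fuel deg : nat) (rs : seq rule) : seq rule :=
  if rounds is rounds'.+1 then complete rounds' fuel deg (completion_round fuel deg rs)
  else rs.

Definition check (hyps : seq (expr * expr)) (l r : expr) (rounds deg fuel : nat) : bool :=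
  let rs0 := foldl (fun rs h => add_rule fuel rs (psub (poly_of h.1) (poly_of h.2))) [::] hyps in
  nilp (reduce fuel (complete rounds fuel deg rs0) (psub (poly_of l) (poly_of r))).

Section Soundness.
Variables (R : nzRingType) (env : seq R).

Definition atom_val i := nth 0 env i.
Definition word_val (w : word) : R := foldr (fun i acc => atom_val i * acc) 1 w.
Definition monomial_val (t : monomial) : R := t.1%:~R * word_val t.2.
Definition poly_val (p : ncpoly) : R := foldr (fun t acc => monomial_val t + acc) 0 p.
Fixpoint expr_val (e : expr) : R :=
  match e with
  | Atom i => atom_val i | Zero => 0 | One => 1
  | Add x y => expr_val x + expr_val y | Opp x => - expr_val x
  | Mul x y => expr_val x * expr_val y
  end.

Lemma word_val_cat u v : word_val (u ++ v) = word_val u * word_val v.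
Proof. by elim: u => [|i u IH] /=; rewrite ?mul1r // IH mulrA. Qed.

Lemma poly_val_cat p q : poly_val (p ++ q) = poly_val p + poly_val q.
Proof. by elim: p => [|t p IH] /=; rewrite ?add0r // IH addrA. Qed.

Lemma monomial_val0 w : monomial_val (0, w) = 0.
Proof. by rewrite /monomial_val mul0r. Qed.

Lemma word_cmp_eq u v : word_cmp u v = Eq -> u = v.
Proof.
rewrite /word_cmp; case: (Nat.compare _ _) => //.
elim: u v => [|x u IH] [|y v] //=.
by case H: (Nat.compare x y) => // /IH ->; rewrite (Nat.compare_eq _ _ H).
Qed.

Lemma insert_val t p : poly_val (insert t p) = monomial_val t + poly_val p.
Proof.
case: t => c w; elim: p => [|[d s] p IH] /=.
  by case: eqP => [->|_] /=; rewrite ?monomial_val0 ?addr0.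
case E: (word_cmp w s) => /=.
- move/word_cmp_eq: E => <-.
  have Hcd : monomial_val (c + d, w) = monomial_val (c, w) + monomial_val (d, w).
    by rewrite /monomial_val /= intrD mulrDl.
  case: eqP => [Hc0|_] /=; last by rewrite Hcd addrA.
  by rewrite addrA -Hcd Hc0 monomial_val0 add0r.
- by rewrite IH addrCA.
- by case: eqP => [->|_] /=; rewrite ?monomial_val0 ?add0r.
Qed.

Lemma normalize_val p : poly_val (normalize p) = poly_val p.
Proof. by elim: p => [|t p IH] //=; rewrite insert_val IH. Qed.

Lemma popp_val p : poly_val (popp p) = - poly_val p.
Proof.
elim: p => [|[c w] p IH] /=; first by rewrite oppr0.
by rewrite IH opprD /monomial_val /= intrN mulNr.
Qed.

Lemma monomial_val_mul c w d v :
  monomial_val (c * d, w ++ v) = monomial_val (c, w) * monomial_val (d, v).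
Proof.
rewrite /monomial_val /= word_val_cat intrM -!mulrA; congr (_ * _).
by rewrite !mulrzl mulrzAr.
Qed.

Lemma pmul_val p q : poly_val (pmul p q) = poly_val p * poly_val q.
Proof.
rewrite /pmul normalize_val.
elim: p => [|[c w] p IH] /=; first by rewrite mul0r.
rewrite poly_val_cat IH mulrDl; congr (_ + _); clear IH.
elim: q => [|[d v] q IHq] /=; first by rewrite mulr0.
by rewrite IHq mulrDr monomial_val_mul.
Qed.

Lemma psub_val p q : poly_val (psub p q) = poly_val p - poly_val q.
Proof. by rewrite /psub normalize_val poly_val_cat popp_val. Qed.

Lemma pword_val w : poly_val (pword w) = word_val w.
Proof. by rewrite /= /monomial_val /= mul1r addr0. Qed.

Lemma poly_of_val e : poly_val (poly_of e) = expr_val e.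
Proof.
elim: e => [i||| x IHx y IHy | x IHx | x IHx y IHy] /=.
- by rewrite /monomial_val /= mul1r mulr1 addr0.
- by [].
- by rewrite /monomial_val /= mul1r addr0.
- by rewrite normalize_val poly_val_cat IHx IHy.
- by rewrite popp_val IHx.
- by rewrite pmul_val IHx IHy.
Qed.

Definition valid (r : rule) := word_val r.1 = poly_val r.2.
Definition all_valid (rs : seq rule) := forall r, List.In r rs -> valid r.

Lemma strip_prefixP l w s : strip_prefix l w = Some s -> w = l ++ s.
Proof.
elim: l w => [|x l IH] [|y w] //=; [by case=> -> | by case=> -> |].
by case: (Nat.eqb_spec x y) => // -> /IH ->.
Qed.

Lemma factorP l w pre suf : factor l w = Some (pre, suf) -> w = pre ++ l ++ suf.
Proof.
elim: w pre suf => [|y w IH] pre suf /=.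
  by case E: (strip_prefix l [::]) => [s|] // [<- <-]; exact: strip_prefixP E.
case E: (strip_prefix l (y :: w)) => [s|].
  by case=> <- <-; exact: strip_prefixP E.
by case F: (factor l w) => [[pre' s]|] // [<- <-]; rewrite (IH _ _ F).
Qed.

Lemma embed_val c pre suf p :
  poly_val (embed c pre suf p) = c%:~R * word_val pre * poly_val p * word_val suf.
Proof.
elim: p => [|[d v] p IH] /=; first by rewrite mulr0 mul0r.
rewrite IH mulrDr mulrDl; congr (_ + _).
rewrite /monomial_val /= !word_val_cat intrM -!mulrA; congr (_ * _).
by rewrite !mulrzl ?mulrzAr ?mulrzAl !mulrA.
Qed.

Lemma rewrite_monomial_val rs t q :
  all_valid rs -> rewrite_monomial rs t = Some q -> poly_val q = monomial_val t.
Proof.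
elim: rs => [|r rs IH] //= Hv.
case E: (factor r.1 t.2) => [[pre suf]|]; last by apply: IH => r' Hr'; apply: Hv; right.
case=> <-; rewrite embed_val.
have Hr : valid r by apply: Hv; left.
clear IH.
case: t E => c w /= /factorP ->.
by rewrite /monomial_val /= !word_val_cat Hr !mulrA.
Qed.

Lemma rewrite_step_val rs p q :
  all_valid rs -> rewrite_step rs p = Some q -> poly_val q = poly_val p.
Proof.
move=> Hv; elim: p q => [|t p IH] q //=.
case E: (rewrite_monomial rs t) => [q'|].
  by case=> <-; rewrite normalize_val poly_val_cat (rewrite_monomial_val Hv E) addrC.
case F: (rewrite_step rs p) => [q'|] // [<-].
by rewrite /= insert_val normalize_val (IH _ F).
Qed.

Lemma reduce_val n rs p : all_valid rs -> poly_val (reduce n rs p) = poly_val p.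
Proof.
move=> Hv; elim: n p => [|n IH] p //=.
by case E: (rewrite_step rs p) => [q|] //; rewrite IH (rewrite_step_val Hv E).
Qed.

Lemma orient_valid e r : poly_val e = 0 -> orient e = Some r -> valid r.
Proof.
case: e => [|[c w] rest] //= H.
case: eqP => [Hc|_].
  case=> <-; rewrite /valid /= popp_val; apply/eqP; rewrite -addr_eq0.
  by rewrite -H Hc /monomial_val /= mul1r.
case: eqP => [Hc|_] // [<-]; rewrite /valid /=.
apply/eqP; rewrite -subr_eq0 -oppr_eq0 opprB -H Hc /monomial_val /= mulN1r.
by rewrite addrC.
Qed.

Lemma all_valid_rcons rs r : all_valid rs -> valid r -> all_valid (rcons rs r).
Proof.
move=> Hv Hr r'; rewrite -cats1 List.in_app_iff => [[|]]; first exact: Hv.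
by case=> // <-.
Qed.

Lemma add_rule_valid n rs e : all_valid rs -> poly_val e = 0 -> all_valid (add_rule n rs e).
Proof.
move=> Hv He; rewrite /add_rule; case E: (orient _) => [r|] //.
by apply: all_valid_rcons => //; apply: orient_valid E; rewrite reduce_val.
Qed.

Lemma add_rule_upto_valid n m rs e :
  all_valid rs -> poly_val e = 0 -> all_valid (add_rule_upto n m rs e).
Proof.
move=> Hv He; rewrite /add_rule_upto; case E: (orient _) => [r|] //; case: ifP => // _.
by apply: all_valid_rcons => //; apply: orient_valid E; rewrite reduce_val.
Qed.

Lemma critical_pairs_val r1 r2 : valid r1 -> valid r2 ->
  forall e, e \in critical_pairs r1 r2 -> poly_val e = 0.
Proof.
case: r1 => l1 p1; case: r2 => l2 p2; rewrite /valid /= => H1 H2 e.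
rewrite /critical_pairs mem_pmap map_id mem_cat => /orP [].
  case/mapP => k _ /esym; rewrite /overlap /=; case: eqP => // Ho [<-].
  rewrite psub_val !pmul_val !pword_val -H1 -H2 -!word_val_cat.
  apply/eqP; rewrite subr_eq0; apply/eqP; congr word_val.
  by rewrite -{2}(cat_take_drop k l2) -Ho catA cat_take_drop.
rewrite inE => /eqP; rewrite /inclusion /=.
case: eqP => // _; case E: (factor l2 l1) => [[pre suf]|] // [->].
rewrite psub_val !pmul_val !pword_val -H1 -H2 (factorP E) !word_val_cat.
by rewrite mulrA subrr.
Qed.

Lemma In_mem (T : eqType) (x : T) s : x \in s -> List.In x s.
Proof. elim: s => [|y s IH] //=; rewrite inE => /orP [/eqP ->|/IH]; by [left|right]. Qed.

Lemma completion_round_valid n m rs : all_valid rs -> all_valid (completion_round n m rs).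
Proof.
move=> Hv; rewrite /completion_round.
have : forall pr, pr \in [seq (r1, r2) | r1 <- rs, r2 <- rs] -> valid pr.1 /\ valid pr.2.
  move=> [r1 r2] /allpairsP [[x y] /= [Hx Hy [-> ->]]].
  by split; apply: Hv; apply: In_mem.
move: [seq _ | _ <- rs, _ <- rs] => prs.
elim: prs rs Hv => [|pr prs IH] acc Hacc Hp //=.
apply: IH => [|pr' Hpr']; last by apply: Hp; rewrite inE Hpr' orbT.
have [H1 H2] := Hp pr (mem_head _ _).
elim: (critical_pairs _ _) (critical_pairs_val H1 H2) acc Hacc => [|e es IHe] //= He acc Hacc.
apply: IHe => [e' He'|]; first by apply: He; rewrite inE He' orbT.
by apply: add_rule_upto_valid => //; apply: He; rewrite inE eqxx.
Qed.

Lemma complete_valid k n m rs : all_valid rs -> all_valid (complete k n m rs).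
Proof. by elim: k rs => [|k IH] rs //= Hv; apply: IH; apply: completion_round_valid. Qed.

Definition holds (hyps : seq (expr * expr)) : Prop :=
  foldr (fun h acc => expr_val h.1 = expr_val h.2 /\ acc) True hyps.

Lemma hyps_valid n hyps acc : holds hyps -> all_valid acc ->
  all_valid (foldl (fun rs h => add_rule n rs (psub (poly_of h.1) (poly_of h.2))) acc hyps).
Proof.
elim: hyps acc => [|h hs IH] acc //= [Hh1 Hh2] Hacc.
by apply: IH => //; apply: add_rule_valid => //; rewrite psub_val !poly_of_val Hh1 subrr.
Qed.

Theorem check_sound hyps l r k m n :
  holds hyps -> check hyps l r k m n -> expr_val l = expr_val r.
Proof.
move=> Hh /nilP E; have Hv0 := @hyps_valid n hyps [::] Hh (fun _ => False_ind _).
apply/eqP; rewrite -subr_eq0 -!poly_of_val -psub_val.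
have Hv := complete_valid (k := k) (n := n) (m := m) Hv0.
by rewrite -(reduce_val n (psub (poly_of l) (poly_of r)) Hv) E.
Qed.

End Soundness.

Ltac in_list x l :=
  lazymatch l with
  | x :: _ => constr:(true)
  | _ :: ?t => in_list x t
  | _ => constr:(false)
  end.

Ltac add_atoms env t :=
  lazymatch t with
  | @GRing.zero _ => env
  | @GRing.one _ => env
  | @GRing.add _ ?x ?y => let env := add_atoms env x in add_atoms env y
  | @GRing.opp _ ?x => add_atoms env x
  | @GRing.mul _ ?x ?y => let env := add_atoms env x in add_atoms env y
  | _ => lazymatch in_list t env with
         | true => env
         | false => constr:(rcons env t)
         end
  end.

Ltac index x l :=
  lazymatch l with
  | x :: _ => constr:(O)
  | _ :: ?t => let n := index x t in constr:(S n)
  end.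

Ltac reify env t :=
  lazymatch t with
  | @GRing.zero _ => constr:(Zero)
  | @GRing.one _ => constr:(One)
  | @GRing.add _ ?x ?y => let a := reify env x in let b := reify env y in constr:(Add a b)
  | @GRing.opp _ ?x => let a := reify env x in constr:(Opp a)
  | @GRing.mul _ ?x ?y => let a := reify env x in let b := reify env y in constr:(Mul a b)
  | _ => let i := index t env in constr:(Atom i)
  end.

Ltac reify_hyps env T :=
  lazymatch T with
  | True => constr:(@nil (expr * expr))
  | (?l = ?r) /\ ?rest =>
      let a := reify env l in let b := reify env r in
      let t := reify_hyps env rest in constr:((a, b) :: t)
  end.

Ltac hyps_atoms env T :=
  lazymatch T with
  | True => env
  | (?l = ?r) /\ ?rest =>
      let env := add_atoms env l in let env := add_atoms env r in hyps_atoms env rest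
  end.

Ltac solve_with rounds deg H :=
  lazymatch goal with |- @eq ?T ?l ?r =>
    let TH := type of H in
    let env := add_atoms (@nil T) l in
    let env := add_atoms env r in
    let env := hyps_atoms env TH in
    let env := eval simpl in env in
    let el := reify env l in let er := reify env r in
    let hs := reify_hyps env TH in
    refine (@check_sound _ env hs el er rounds deg 100000 H _);
    vm_compute; reflexivity
  end.

End NCRing.

(* [nc_ring k m using (H1, .., Hn) inverting (U1, .., Uk)] proves an equation in a ring from
   the equations [Hi] and the relations [x * x^-1 = 1 = x^-1 * x] for [Ui : x \is a GRing.unit];
   subterms not built from [0], [1], [+], [-], [*] are noncommuting letters.  [k] bounds the
   completion rounds and [m] the length of the words in the rules they add. *)
Ltac nc_units acc us :=
  lazymatch us with
  | pair ?x ?y => let acc := nc_units acc y in nc_units acc x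
  | tt => acc
  | _ => constr:(conj (mulrV us) (conj (mulVr us) acc))
  end.
Ltac nc_hyps acc hs :=
  lazymatch hs with
  | pair ?x ?y => let acc := nc_hyps acc y in nc_hyps acc x
  | tt => acc
  | _ => constr:(conj hs acc)
  end.

Ltac nat_of k := let n := constr:(ltac:(do k apply S; exact O) : nat) in eval compute in n.

Tactic Notation "nc_ring" int_or_var(k) int_or_var(m) "using" constr(hs) "inverting" constr(us) :=
  let H0 := nc_units I us in let H := nc_hyps H0 hs in
  let k := nat_of k in let m := nat_of m in NCRing.solve_with k m H.
Tactic Notation "nc_ring" int_or_var(k) int_or_var(m) "using" constr(hs) :=
  nc_ring k m using hs inverting tt.
Tactic Notation "nc_ring" int_or_var(k) int_or_var(m) "inverting" constr(us) :=
  nc_ring k m using tt inverting us.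
Tactic Notation "nc_ring" int_or_var(k) int_or_var(m) :=
  nc_ring k m using tt inverting tt.

Section Inverse2.
Variable R : unitRingType.
Implicit Types x y z w p q r s : R.

Definition inverse2 x y z w p q r s : Prop :=
  [/\ x * p + y * r = 1, x * q + y * s = 0, z * p + w * r = 0 & z * q + w * s = 1] /\
  [/\ p * x + q * z = 1, p * y + q * w = 0, r * x + s * z = 0 & r * y + s * w = 1].

Definition invertible2 x y z w : Prop := exists p q r s, inverse2 x y z w p q r s.

Lemma inverse2_sym x y z w p q r s :
  inverse2 x y z w p q r s -> inverse2 p q r s x y z w.
Proof. by case=> [[H1 H2 H3 H4] [H5 H6 H7 H8]]; split; split. Qed.

Lemma inverse2_swap_cols x y z w p q r s :
  inverse2 x y z w p q r s -> inverse2 y x w z r s p q.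
Proof.
by case=> [[H1 H2 H3 H4] [H5 H6 H7 H8]]; split; split;
  rewrite // addrC.
Qed.

Lemma inverse2_swap_rows x y z w p q r s :
  inverse2 x y z w p q r s -> inverse2 z w x y q p s r.
Proof.
by case=> [[H1 H2 H3 H4] [H5 H6 H7 H8]]; split; split;
  rewrite // addrC.
Qed.

Lemma inverse2_unit x y z w p q r s :
  inverse2 x y z w p q r s -> w \is a GRing.unit ->
  p * (x - y * w^-1 * z) = 1 /\ (x - y * w^-1 * z) * p = 1.
Proof.
case=> [[H1 H2 H3 H4] [H5 H6 H7 H8]] Uw; split.
  nc_ring 2 4 using (H5, H6, H7, H8) inverting Uw.
nc_ring 2 4 using (H1, H2, H3, H4) inverting Uw.
Qed.

Lemma inverse2_schur_unit x y z w p q r s :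
  inverse2 x y z w p q r s -> w \is a GRing.unit -> x - y * w^-1 * z \is a GRing.unit.
Proof. by move=> Hi /(inverse2_unit Hi) [H1 H2]; apply/unitrP; exists p. Qed.

Lemma inverse2_units x y z w p q r s : inverse2 x y z w p q r s ->
  [/\ x \is a GRing.unit, y \is a GRing.unit, z \is a GRing.unit & w \is a GRing.unit] ->
  [/\ p \is a GRing.unit, q \is a GRing.unit, r \is a GRing.unit & s \is a GRing.unit].
Proof.
have unitP t e : t * e = 1 /\ e * t = 1 -> t \is a GRing.unit.
  by case=> H1 H2; apply/unitrP; exists e.
move=> Hi [Ux Uy Uz Uw]; split; apply: unitP.
- exact: inverse2_unit Hi Uw.
- exact: inverse2_unit (inverse2_swap_rows Hi) Uy.
- exact: inverse2_unit (inverse2_swap_cols Hi) Uz.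
- exact: inverse2_unit (inverse2_swap_rows (inverse2_swap_cols Hi)) Ux.
Qed.

Lemma invertible2_scale x y z w s1 s2 t1 t2 :
  [/\ s1 \is a GRing.unit, s2 \is a GRing.unit, t1 \is a GRing.unit & t2 \is a GRing.unit] ->
  invertible2 x y z w -> invertible2 (s1 * x * t1) (s1 * y * t2) (s2 * z * t1) (s2 * w * t2).
Proof.
case=> Us1 Us2 Ut1 Ut2 [p [q [r [s [[H1 H2 H3 H4] [H5 H6 H7 H8]]]]]].
exists (t1^-1 * p * s1^-1), (t1^-1 * q * s2^-1), (t2^-1 * r * s1^-1), (t2^-1 * s * s2^-1).
by split; split; nc_ring 1 4 using (H1, H2, H3, H4, H5, H6, H7, H8) inverting (Us1, Us2, Ut1, Ut2).
Qed.

Lemma inverse2_J2 x y z w p q r s :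
  [/\ x \is a GRing.unit, y \is a GRing.unit, z \is a GRing.unit & w \is a GRing.unit] ->
  inverse2 x y z w p q r s ->
  inverse2 x^-1 z^-1 y^-1 w^-1 (- (y * s * z)) (y * s * w) (w * s * z) (w - w * s * w).
Proof.
case=> Ux Uy Uz Uw [[H1 H2 H3 H4] [H5 H6 H7 H8]].
by split; split; nc_ring 3 6 using (H1, H2, H3, H4, H5, H6, H7, H8) inverting (Ux, Uy, Uz, Uw).
Qed.

End Inverse2.

Notation o0 := (@Ordinal 3 0 isT).
Notation o1 := (@Ordinal 3 1 isT).
Notation o2 := (@Ordinal 3 2 isT).

Lemma ord3_0 : (0 : 'I_3) = o0. Proof. exact/val_inj. Qed.

Lemma ord3P (P : 'I_3 -> Prop) : P o0 -> P o1 -> P o2 -> forall i, P i.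
Proof.
move=> H0 H1 H2 [[|[|[|n]]] Hn] //.
- by rewrite (bool_irrelevance Hn isT).
- by rewrite (bool_irrelevance Hn isT).
- by rewrite (bool_irrelevance Hn isT).
Qed.

Lemma mulmx3E (R : pzRingType) (X Y : 'M[R]_3) i j :
  (X *m Y) i j = X i o0 * Y o0 j + X i o1 * Y o1 j + X i o2 * Y o2 j.
Proof.
rewrite mxE !big_ord_recl big_ord0 addr0 !addrA.
have -> : lift (ord0 : 'I_3) (lift ord0 ord0) = o2 by exact/val_inj.
have -> : lift (ord0 : 'I_3) ord0 = o1 by exact/val_inj.
by have -> : (ord0 : 'I_3) = o0 by exact/val_inj.
Qed.

Lemma minv_spec (R : unitRingType) n (M : 'M[R]_n) :
  mx_invertible M -> M *m minv M = 1%:M /\ minv M *m M = 1%:M.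
Proof. exact: epsilon_spec. Qed.

Lemma J2_LambdaL (R : unitRingType) (M : 'M[R]_3) : all_units M ->
  J2 (LambdaL M) = \matrix_(j, k) (M 0 j * (M k j)^-1 * (M k 0 * (M 0 0)^-1)).
Proof.
move=> U; apply/matrixP => j k; rewrite !mxE.
by rewrite !invrM ?unitrMl ?unitrV ?invrK ?U // !mulrA.
Qed.

Section HatMatrix.
Variables (R : unitRingType) (a b c d : R).
Local Notation H := (hatmx a b c d).

Lemma is_hat_hatmx : is_hat H.
Proof. by move=> k; rewrite ord3_0; move: k; apply: ord3P; rewrite !mxE. Qed.

Lemma J2_hatmx :
  [/\ a \is a GRing.unit, b \is a GRing.unit, c \is a GRing.unit & d \is a GRing.unit] ->
  J2 H = hatmx a^-1 c^-1 b^-1 d^-1.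
Proof.
case=> *; apply/matrixP => j k; rewrite !mxE.
by move: j k; apply: ord3P; apply: ord3P; rewrite /= ?invr1.
Qed.

Lemma hatmx_mulmx (X : 'M[R]_3) j :
  [/\ (H *m X) o0 j = X o0 j + X o1 j + X o2 j,
      (H *m X) o1 j = X o0 j + a * X o1 j + b * X o2 j
    & (H *m X) o2 j = X o0 j + c * X o1 j + d * X o2 j].
Proof. by split; rewrite mulmx3E !mxE /= !mul1r. Qed.

Lemma mulmx_hatmx (X : 'M[R]_3) i :
  [/\ (X *m H) i o0 = X i o0 + X i o1 + X i o2,
      (X *m H) i o1 = X i o0 + X i o1 * a + X i o2 * c
    & (X *m H) i o2 = X i o0 + X i o1 * b + X i o2 * d].
Proof. by split; rewrite mulmx3E !mxE /= !mulr1. Qed.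

(* The inverse is the Schur complement formula for the corner entry [1]. *)
Lemma hatmx_invertible :
  invertible2 (a - 1) (b - 1) (c - 1) (d - 1) -> mx_invertible H.
Proof.
case=> p [q [r [s [[H1 H2 H3 H4] [H5 H6 H7 H8]]]]].
pose X : 'M[R]_3 := \matrix_(i, j) match nat_of_ord i, nat_of_ord j with
  | 0, 0 => 1 + p + q + r + s | 0, 1 => - (p + r) | 0, _ => - (q + s)
  | 1, 0 => - (p + q) | 1, 1 => p | 1, _ => q
  | _, 0 => - (r + s) | _, 1 => r | _, _ => s end.
exists X; split; apply/matrixP => i j; rewrite mulmx3E !mxE;
  move: i j; apply: ord3P; apply: ord3P => /=; rewrite ?mulr1n ?mulr0n;
  nc_ring 2 4 using (H1, H2, H3, H4, H5, H6, H7, H8).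
Qed.

Record border_units : Prop := BorderUnits {
  unit_a1 : a - 1 \is a GRing.unit; unit_b1 : b - 1 \is a GRing.unit;
  unit_c1 : c - 1 \is a GRing.unit; unit_d1 : d - 1 \is a GRing.unit;
  unit_ba : b - a \is a GRing.unit; unit_dc : d - c \is a GRing.unit;
  unit_ca : c - a \is a GRing.unit; unit_db : d - b \is a GRing.unit }.

Section Inverse.
Variable M : 'M[R]_3.
Hypotheses (HM1 : H *m M = 1%:M) (HM2 : M *m H = 1%:M).

Lemma hatmx_inv_col j :
  [/\ M o0 j + M o1 j + M o2 j = (o0 == j)%:R,
      M o0 j + a * M o1 j + b * M o2 j = (o1 == j)%:R
    & M o0 j + c * M o1 j + d * M o2 j = (o2 == j)%:R].
Proof. by have [<- <- <-] := hatmx_mulmx M j; rewrite HM1 !mxE. Qed.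

Lemma hatmx_inv_row i :
  [/\ M i o0 + M i o1 + M i o2 = (i == o0)%:R,
      M i o0 + M i o1 * a + M i o2 * c = (i == o1)%:R
    & M i o0 + M i o1 * b + M i o2 * d = (i == o2)%:R].
Proof. by have [<- <- <-] := mulmx_hatmx M i; rewrite HM2 !mxE. Qed.

Lemma hatmx_inv_block :
  inverse2 (a - 1) (b - 1) (c - 1) (d - 1) (M o1 o1) (M o1 o2) (M o2 o1) (M o2 o2).
Proof.
have [l01 l11 l21] := hatmx_inv_col o1; have [l02 l12 l22] := hatmx_inv_col o2.
have [r10 r11 r12] := hatmx_inv_row o1; have [r20 r21 r22] := hatmx_inv_row o2.
rewrite /= ?mulr1n ?mulr0n in l01 l11 l21 l02 l12 l22 r10 r11 r12 r20 r21 r22.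
split; split;
  nc_ring 1 4 using (l01, l11, l21, l02, l12, l22, r10, r11, r12, r20, r21, r22).
Qed.

Lemma hatmx_inv_row0 : border_units ->
  [/\ M o0 o1 = (d - 1)^-1 * (c - d) * M o1 o1, M o0 o1 = (c - 1)^-1 * (d - c) * M o2 o1,
      M o0 o2 = (b - 1)^-1 * (a - b) * M o1 o2 & M o0 o2 = (a - 1)^-1 * (b - a) * M o2 o2].
Proof.
case=> Ua1 Ub1 Uc1 Ud1 _ _ _ _.
have [l01 _ l21] := hatmx_inv_col o1; have [l02 l12 _] := hatmx_inv_col o2.
rewrite /= ?mulr1n ?mulr0n in l01 l21 l02 l12.
split; [nc_ring 3 4 using (l01, l21) inverting Ud1 | nc_ring 3 4 using (l01, l21) inverting Uc1
       | nc_ring 3 4 using (l02, l12) inverting Ub1 | nc_ring 3 4 using (l02, l12) inverting Ua1].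
Qed.

Lemma hatmx_inv_col0 : border_units ->
  [/\ M o1 o0 = M o1 o1 * (b - d) * (d - 1)^-1, M o1 o0 = M o1 o2 * (d - b) * (b - 1)^-1,
      M o2 o0 = M o2 o1 * (a - c) * (c - 1)^-1 & M o2 o0 = M o2 o2 * (c - a) * (a - 1)^-1].
Proof.
case=> Ua1 Ub1 Uc1 Ud1 _ _ _ _.
have [r10 _ r12] := hatmx_inv_row o1; have [r20 r21 _] := hatmx_inv_row o2.
rewrite /= ?mulr1n ?mulr0n in r10 r12 r20 r21.
split; [nc_ring 3 4 using (r10, r12) inverting Ud1 | nc_ring 3 4 using (r10, r12) inverting Ub1
       | nc_ring 3 4 using (r20, r21) inverting Uc1 | nc_ring 3 4 using (r20, r21) inverting Ua1].
Qed.

Lemma hatmx_inv_block_units : border_units ->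
  [/\ M o1 o1 \is a GRing.unit, M o1 o2 \is a GRing.unit,
      M o2 o1 \is a GRing.unit & M o2 o2 \is a GRing.unit].
Proof. by case=> *; apply: inverse2_units hatmx_inv_block _. Qed.

Section WithBlockInverse.
Variables (g11 g12 g21 g22 : R).
Hypothesis Hg : inverse2 a b c d g11 g12 g21 g22.

(* [(u, v)] and [(y1, y2)] solve [B (u, v)^T = (1, 1)^T] and [(y1, y2) B = (1, 1)]. *)
Let u := g11 + g12.
Let v := g21 + g22.
Let y1 := g11 + g21.
Let y2 := g12 + g22.

Lemma hatmx_inv00 : M o0 o0 * (1 - u - v) = 1 /\ (1 - u - v) * M o0 o0 = 1.
Proof.
have [[G1 G2 G3 G4] [G5 G6 G7 G8]] := Hg.
have [r00 r01 r02] := hatmx_inv_row o0; have [l00 l10 l20] := hatmx_inv_col o0.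
rewrite /= ?mulr1n ?mulr0n in r00 r01 r02 l00 l10 l20.
have E1 : M o0 o0 * (1 - u - v) = 1.
  by rewrite /u /v; nc_ring 2 4 using (r00, r01, r02, G1, G2, G3, G4).
have E2 : (1 - y1 - y2) * M o0 o0 = 1.
  by rewrite /y1 /y2; nc_ring 2 4 using (l00, l10, l20, G5, G6, G7, G8).
have E : 1 - y1 - y2 = 1 - u - v.
  by rewrite -[LHS](mulr1 (1 - y1 - y2)) -[X in _ * X]E1 mulrA E2 mul1r.
by split; rewrite // -E.
Qed.

Lemma hatmx_inv_col0_u : M o1 o0 = - u * M o0 o0 /\ M o2 o0 = - v * M o0 o0.
Proof.
have [_ [G5 G6 G7 G8]] := Hg; have [_ l10 l20] := hatmx_inv_col o0.
rewrite /= ?mulr0n in l10 l20; rewrite /u /v.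
by split; nc_ring 2 4 using (l10, l20, G5, G6, G7, G8).
Qed.

Lemma hatmx_inv_row0_y : M o0 o1 = - M o0 o0 * y1 /\ M o0 o2 = - M o0 o0 * y2.
Proof.
have [[G1 G2 G3 G4] _] := Hg; have [_ r01 r02] := hatmx_inv_row o0.
rewrite /= ?mulr0n in r01 r02; rewrite /y1 /y2.
by split; nc_ring 2 4 using (r01, r02, G1, G2, G3, G4).
Qed.

Lemma hatmx_inv_units : border_units -> all_units M.
Proof.
move=> Hb; have [Ua1 Ub1 Uc1 Ud1 Uba Udc Uca Udb] := Hb.
have [U11 U12 U21 U22] := hatmx_inv_block_units Hb.
have [E01 _ _ E02] := hatmx_inv_row0 Hb; have [E10 _ _ E20] := hatmx_inv_col0 Hb.
have U00 : M o0 o0 \is a GRing.unit.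
  by have [H1 H2] := hatmx_inv00; apply/unitrP; exists (1 - u - v).
have Ucd : c - d \is a GRing.unit by rewrite -opprB unitrN.
have Ubd : b - d \is a GRing.unit by rewrite -opprB unitrN.
apply: ord3P; apply: ord3P => //=;
  by rewrite ?E01 ?E02 ?E10 ?E20 ?unitrMl ?unitrMr ?unitrV.
Qed.

Lemma hatmx_inv_ratios : border_units ->
  [/\ M o0 o1 * (M o1 o1)^-1 = (d - 1)^-1 * (c - d),
      M o0 o1 * (M o2 o1)^-1 = (c - 1)^-1 * (d - c),
      M o0 o2 * (M o1 o2)^-1 = (b - 1)^-1 * (a - b)
    & M o0 o2 * (M o2 o2)^-1 = (a - 1)^-1 * (b - a)].
Proof.
move=> Hb; have [U11 U12 U21 U22] := hatmx_inv_block_units Hb.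
have [E1 E2 E3 E4] := hatmx_inv_row0 Hb.
by split; [rewrite {1}E1 | rewrite {1}E2 | rewrite {1}E3 | rewrite {1}E4]; rewrite mulrK.
Qed.

Lemma J2_LambdaL_hatmx_inv : border_units ->
  J2 (LambdaL M) = hatmx ((d - 1)^-1 * (c - d) * - u) ((c - 1)^-1 * (d - c) * - v)
                         ((b - 1)^-1 * (a - b) * - u) ((a - 1)^-1 * (b - a) * - v).
Proof.
move=> Hb; have U := hatmx_inv_units Hb.
have [E11 E21 E12 E22] := hatmx_inv_ratios Hb.
have [E10 E20] := hatmx_inv_col0_u.
have U10 : M o1 o0 * (M o0 o0)^-1 = - u by rewrite E10 mulrK.
have U20 : M o2 o0 * (M o0 o0)^-1 = - v by rewrite E20 mulrK.
rewrite J2_LambdaL //; apply/matrixP => j k; rewrite !mxE ord3_0.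
move: j k; apply: ord3P; apply: ord3P => /=;
  rewrite ?E11 ?E21 ?E12 ?E22;
  first [by rewrite !divrr ?mulr1 ?U | by rewrite mulrA divrK ?divrr ?U | by rewrite ?U10 ?U20].
Qed.

Lemma LambdaR_hatmx_inv : border_units ->
  LambdaR M = hatmx ((d - 1) * (b - d)^-1 * - y1^-1) ((b - 1) * (d - b)^-1 * - y2^-1)
                    ((c - 1) * (a - c)^-1 * - y1^-1) ((a - 1) * (c - a)^-1 * - y2^-1).
Proof.
move=> Hb; have U := hatmx_inv_units Hb.
have [Ua1 Ub1 Uc1 Ud1 Uba Udc Uca Udb] := Hb.
have [E01 E02] := hatmx_inv_row0_y.
have Ey y : y \is a GRing.unit -> (- M o0 o0 * y)^-1 * M o0 o0 = - y^-1.
  by move=> Uy0; rewrite mulNr invrN invrM ?U // mulNr -mulrA mulVr ?U ?mulr1.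
have Uy1 : y1 \is a GRing.unit.
  by have := U o0 o1; rewrite E01 mulNr unitrN unitrMr ?U.
have Uy2 : y2 \is a GRing.unit.
  by have := U o0 o2; rewrite E02 mulNr unitrN unitrMr ?U.
have K x y z : x \is a GRing.unit -> y \is a GRing.unit -> z \is a GRing.unit ->
    (x * y * z^-1)^-1 * x = z * y^-1.
  by move=> Ux Uy0 Uz; rewrite !invrM ?unitrMl ?unitrV // invrK -!mulrA mulVr ?mulr1.
have [F11 F12 F21 F22] := hatmx_inv_col0 Hb.
have Ubd : b - d \is a GRing.unit by rewrite -opprB unitrN.
have Uac : a - c \is a GRing.unit by rewrite -opprB unitrN.
apply/matrixP => j k; rewrite !mxE ord3_0.
move: j k; apply: ord3P; apply: ord3P => /=;
  rewrite ?mulrK ?divrr ?mulVr ?mul1r ?mulVr ?U // -mulrA.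
- by rewrite E01 Ey // F11 K ?U.
- by rewrite E02 Ey // F12 K ?U.
- by rewrite E01 Ey // F21 K ?U.
- by rewrite E02 Ey // F22 K ?U.
Qed.

End WithBlockInverse.
End Inverse.
End HatMatrix.

Lemma unit_subV (R : unitRingType) (x y : R) :
  x \is a GRing.unit -> y \is a GRing.unit -> y - x \is a GRing.unit ->
  x^-1 - y^-1 \is a GRing.unit.
Proof.
move=> Ux Uy Uyx; have -> : x^-1 - y^-1 = x^-1 * (y - x) * y^-1.
  by rewrite mulrBr mulrBl mulVr // mul1r mulrK.
by rewrite !unitrMl ?unitrV.
Qed.

Lemma unit_1BV (R : unitRingType) (x : R) :
  x \is a GRing.unit -> x - 1 \is a GRing.unit -> 1 - x^-1 \is a GRing.unit.
Proof.
move=> Ux Ux1; have -> : 1 - x^-1 = (x - 1) * x^-1 by rewrite mulrBl mulrV // mul1r.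
by rewrite unitrMl // unitrV.
Qed.

Lemma inv_eq (R : unitRingType) (x y : R) : y * x = 1 -> x * y = 1 -> x^-1 = y.
Proof.
move=> H1 H2; have Ux : x \is a GRing.unit by apply/unitrP; exists y.
by rewrite -[x^-1]mulr1 -H2 mulrA mulVr // mul1r.
Qed.

(* [(u, v)^T = B^-1 (1, 1)^T] for [B = (a b; c d)] and [Fx] stands for [1 - x^-1].  The first
   factor of [omega] is [D^-1] and [omega = W * s] ([omega_eq]). *)
Section Identities.
Variables (R : unitRingType) (a b c d g11 g12 g21 g22 : R).
Hypotheses (Ua : a \is a GRing.unit) (Ub : b \is a GRing.unit)
           (Uc : c \is a GRing.unit) (Ud : d \is a GRing.unit).
Hypothesis Hb : border_units a b c d.
Hypothesis Hg : inverse2 a b c d g11 g12 g21 g22.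
Hypothesis HJ : invertible2 (a^-1 - 1) (c^-1 - 1) (b^-1 - 1) (d^-1 - 1).

Let Ua1 := unit_a1 Hb. Let Ub1 := unit_b1 Hb. Let Uc1 := unit_c1 Hb. Let Ud1 := unit_d1 Hb.
Let Uba := unit_ba Hb. Let Udc := unit_dc Hb. Let Uca := unit_ca Hb. Let Udb := unit_db Hb.

Let u := g11 + g12.
Let v := g21 + g22.
Let s := u + v - 1.
Let D := d * (d - b)^-1 - c * (c - a)^-1.
Let Fa := 1 - a^-1.
Let Fb := 1 - b^-1.
Let Fc := 1 - c^-1.
Let Fd := 1 - d^-1.
Let S1 := Fa * Fb^-1 - Fc * Fd^-1.
Let S2 := Fd * Fc^-1 - Fb * Fa^-1.
Let q := (b - 1) * (b - a)^-1 * a.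
Let p := (d - 1) * (d - c)^-1 * c.
Let W := q - p.

Lemma sum_u : a * u + b * v = 1.
Proof. by have [[G1 G2 _ _] _] := Hg; rewrite /u /v !mulrDr addrACA G1 G2 addr0. Qed.

Lemma sum_v : c * u + d * v = 1.
Proof. by have [[_ _ G3 G4] _] := Hg; rewrite /u /v !mulrDr addrACA G3 G4 add0r. Qed.

Lemma D_inv : D * ((d - b) * v) = 1 /\ ((d - b) * v) * D = 1.
Proof.
have [[G1 G2 G3 G4] [G5 G6 G7 G8]] := Hg.
by rewrite /D /v; split;
  nc_ring 3 5 using (G1, G2, G3, G4, G5, G6, G7, G8) inverting (Udb, Uca).
Qed.

Lemma UFa : Fa \is a GRing.unit. Proof. exact: unit_1BV. Qed.
Lemma UFb : Fb \is a GRing.unit. Proof. exact: unit_1BV. Qed.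
Lemma UFc : Fc \is a GRing.unit. Proof. exact: unit_1BV. Qed.
Lemma UFd : Fd \is a GRing.unit. Proof. exact: unit_1BV. Qed.

Lemma S1_unit : S1 \is a GRing.unit.
Proof.
have [e [f [g [h /inverse2_swap_cols Hi]]]] := HJ.
have Ub' : b^-1 - 1 \is a GRing.unit by rewrite -opprB unitrN UFb.
have /(inverse2_schur_unit Hi) UQ := Ub'.
have -> : S1 = ((c^-1 - 1) - (a^-1 - 1) * (b^-1 - 1)^-1 * (d^-1 - 1)) * Fd^-1.
  have E : (b^-1 - 1)^-1 = - Fb^-1 by rewrite -invrN opprB.
  have UFd' := UFd.
  by rewrite E /S1 /Fa /Fb /Fc /Fd in UFd' *; nc_ring 2 4 inverting UFd'.
by rewrite unitrMl // unitrV UFd.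
Qed.

Lemma S2_unit : S2 \is a GRing.unit.
Proof.
have [e [f [g [h /inverse2_swap_rows Hi]]]] := HJ.
have Uc' : c^-1 - 1 \is a GRing.unit by rewrite -opprB unitrN UFc.
have /(inverse2_schur_unit Hi) UQ := Uc'.
have -> : S2 = ((b^-1 - 1) - (d^-1 - 1) * (c^-1 - 1)^-1 * (a^-1 - 1)) * Fa^-1.
  have E : (c^-1 - 1)^-1 = - Fc^-1 by rewrite -invrN opprB.
  have UFa' := UFa.
  by rewrite E /S2 /Fa /Fb /Fc /Fd in UFa' *; nc_ring 2 4 inverting UFa'.
by rewrite unitrMl // unitrV UFa.
Qed.

Lemma q_inv : q * (1 - Fa * Fb^-1) = 1 /\ (1 - Fa * Fb^-1) * q = 1.
Proof.
have UFb' := UFb; rewrite /Fa /Fb in UFb' *; rewrite /q.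
by split; nc_ring 3 6 inverting (Ua, Ub, Ub1, Uba, UFb').
Qed.

Lemma p_inv : p * (1 - Fc * Fd^-1) = 1 /\ (1 - Fc * Fd^-1) * p = 1.
Proof.
have UFd' := UFd; rewrite /Fc /Fd in UFd' *; rewrite /p.
by split; nc_ring 3 6 inverting (Uc, Ud, Ud1, Udc, UFd').
Qed.

Lemma q1_inv : (1 - q) * (1 - Fb * Fa^-1) = 1 /\ (1 - Fb * Fa^-1) * (1 - q) = 1.
Proof.
have UFa' := UFa; rewrite /Fa /Fb in UFa' *; rewrite /q.
by split; nc_ring 3 6 inverting (Ua, Ub, Ua1, Ub1, Uba, UFa').
Qed.

Lemma p1_inv : (1 - p) * (1 - Fd * Fc^-1) = 1 /\ (1 - Fd * Fc^-1) * (1 - p) = 1.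
Proof.
have UFc' := UFc; rewrite /Fc /Fd in UFc' *; rewrite /p.
by split; nc_ring 3 6 inverting (Uc, Ud, Uc1, Ud1, Udc, UFc').
Qed.

Lemma W_factor :
  [/\ W = q * S1 * p, W = p * S1 * q, W = (1 - p) * S2 * (1 - q) & W = (1 - q) * S2 * (1 - p)].
Proof.
have [q1 q2] := q_inv; have [p1 p2] := p_inv; have [q3 q4] := q1_inv; have [p3 p4] := p1_inv.
by rewrite /W /S1 /S2; split; nc_ring 2 5 using (q1, q2, p1, p2, q3, q4, p3, p4).
Qed.

Lemma W_unit : W \is a GRing.unit.
Proof.
have [-> _ _ _] := W_factor; have [q1 q2] := q_inv; have [p1 p2] := p_inv.
have Uq : q \is a GRing.unit by apply/unitrP; exists (1 - Fa * Fb^-1).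
have Up : p \is a GRing.unit by apply/unitrP; exists (1 - Fc * Fd^-1).
by have US := S1_unit; rewrite unitrMl // unitrMl.
Qed.

Let a' := (d - 1)^-1 * (c - d) * - u.
Let b' := (c - 1)^-1 * (d - c) * - v.
Let c' := (b - 1)^-1 * (a - b) * - u.
Let d' := (a - 1)^-1 * (b - a) * - v.

(* [hatmx a' b' c' d'] is [Phi (hatmx a b c d)], see [J2_LambdaL_hatmx_inv]. *)
Lemma Phi_entries :
  [/\ a' - 1 = Fd^-1 * s, b' - 1 = Fc^-1 * s, c' - 1 = Fb^-1 * s & d' - 1 = Fa^-1 * s].
Proof.
have Su := sum_u; have Sv := sum_v.
have UFa' := UFa; have UFb' := UFb; have UFc' := UFc; have UFd' := UFd.
rewrite /a' /b' /c' /d' /s /Fa /Fb /Fc /Fd in UFa' UFb' UFc' UFd' *; split.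
- by nc_ring 3 5 using (Su, Sv) inverting (Ud, UFd', Ud1).
- by nc_ring 3 5 using (Su, Sv) inverting (Uc, UFc', Uc1).
- by nc_ring 3 5 using (Su, Sv) inverting (Ub, UFb', Ub1).
- by nc_ring 3 5 using (Su, Sv) inverting (Ua, UFa', Ua1).
Qed.

Let ut := - (S1^-1 * (Fc - Fa) * D * W).
Let vt := S2^-1 * (Fd - Fb) * D * W.

Lemma Finv_rel :
  [/\ a * (1 - Fa) = 1 /\ (1 - Fa) * a = 1, b * (1 - Fb) = 1 /\ (1 - Fb) * b = 1,
      c * (1 - Fc) = 1 /\ (1 - Fc) * c = 1 & d * (1 - Fd) = 1 /\ (1 - Fd) * d = 1].
Proof. by rewrite /Fa /Fb /Fc /Fd !opprB !subrKC !mulrV ?mulVr. Qed.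

(* The two equations of [ut_vt_solve] before multiplication on the right by [D * W]. *)
Lemma ut_vt_row1 :
  - S1^-1 * (Fc - Fa) + S2^-1 * (Fd - Fb)
    + s * (- Fd^-1 * S1^-1 * (Fc - Fa) + Fc^-1 * S2^-1 * (Fd - Fb))
  = (1 - Fa * Fb^-1) * S1^-1 * (1 - Fc * Fd^-1) * (d - b) * v.
Proof.
have [[xa1 xa2] [xb1 xb2] [xc1 xc2] [xd1 xd2]] := Finv_rel.
have Su := sum_u; have Sv := sum_v.
have UFa' := UFa; have UFb' := UFb; have UFc' := UFc; have UFd' := UFd.
have US1 := S1_unit; have US2 := S2_unit.
rewrite /s /S1 /S2 in US1 US2 *.
by nc_ring 7 6 using (xa1, xa2, xb1, xb2, xc1, xc2, xd1, xd2, mulrV UFa', mulVr UFa',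
  mulrV UFb', mulVr UFb', mulrV UFc', mulVr UFc', mulrV UFd', mulVr UFd', Su, Sv,
  mulrV US1, mulVr US1, mulrV US2, mulVr US2).
Qed.

Lemma ut_vt_row2 :
  (Fb^-1 - Fd^-1) * (- S1^-1 * (Fc - Fa)) + (Fa^-1 - Fc^-1) * (S2^-1 * (Fd - Fb)) = 0.
Proof.
have UFa' := UFa; have UFb' := UFb; have UFc' := UFc; have UFd' := UFd.
have US1 := S1_unit; have US2 := S2_unit.
rewrite /S1 /S2 in US1 US2 *.
by nc_ring 7 7 inverting (UFa', UFb', UFc', UFd', US1, US2).
Qed.

(* [(s^-1 ut s, s^-1 vt s)] solves the analogue of [sum_u], [sum_v] for [Phi (hatmx a b c d)]. *)
Lemma ut_vt_solve : ut + vt + s * (Fd^-1 * ut + Fc^-1 * vt) = 1 /\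
                    (Fb^-1 - Fd^-1) * ut + (Fa^-1 - Fc^-1) * vt = 0.
Proof.
have E1 := ut_vt_row1; have E2 := ut_vt_row2.
have [_ D2] := D_inv; have [_ W2 _ _] := W_factor.
have [q1 q2] := q_inv; have [p1 p2] := p_inv; have US1 := S1_unit.
rewrite /ut /vt /s in E1 *; split; last by nc_ring 0 8 using E2.
by nc_ring 2 8 using (E1, D2, W2, mulrV US1, mulVr US1, q1, q2, p1, p2).
Qed.

Lemma omega_eq : omega a b c d = W * s.
Proof.
have Su := sum_u; have Sv := sum_v; have [D1 D2] := D_inv.
rewrite /omega; have -> : (d * (d - b)^-1 - c * (c - a)^-1)^-1 = (d - b) * v by apply: inv_eq.
rewrite /W /q /p /s.
by nc_ring 4 6 using (Su, Sv, D1, D2) inverting (Udb, Uca, Udc, Uba).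
Qed.

(* The row sums of the inverse of [(a^-1 c^-1; b^-1 d^-1)] given by [inverse2_J2]. *)
Let y1 := - (b * g22 * c) + d * g22 * c.
Let y2 := b * g22 * d + (d - d * g22 * d).

Lemma J2_row_sums_inv : y1^-1 = - (a^-1 - c^-1) * D /\ y2^-1 = (b^-1 - d^-1) * D.
Proof.
have [[G1 G2 G3 G4] [G5 G6 G7 G8]] := Hg; have [D1 D2] := D_inv.
rewrite /y1 /y2 /D /v in D1 D2 *; split; apply: inv_eq.
- by nc_ring 3 6 using (G1, G2, G3, G4, G5, G6, G7, G8, mulrV Ua, mulVr Ua, mulrV Uc, mulVr Uc,
    mulrV Udb, mulVr Udb, mulrV Uca, mulVr Uca, D1, D2).
- by nc_ring 3 6 using (G1, G2, G3, G4, G5, G6, G7, G8, mulrV Ua, mulVr Ua, mulrV Uc, mulVr Uc,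
    mulrV Udb, mulVr Udb, mulrV Uca, mulVr Uca, D1, D2).
- by nc_ring 3 6 using (G1, G2, G3, G4, G5, G6, G7, G8, mulrV Ub, mulVr Ub, mulrV Ud, mulVr Ud,
    mulrV Udb, mulVr Udb, mulrV Uca, mulVr Uca, D1, D2).
- by nc_ring 3 6 using (G1, G2, G3, G4, G5, G6, G7, G8, mulrV Ub, mulVr Ub, mulrV Ud, mulVr Ud,
    mulrV Udb, mulVr Udb, mulrV Uca, mulVr Uca, D1, D2).
Qed.

Lemma J2_ratios :
  [/\ (d^-1 - 1) * (c^-1 - d^-1)^-1 = - p, (b^-1 - 1) * (a^-1 - b^-1)^-1 = - q,
      (c^-1 - 1) * (d^-1 - c^-1)^-1 = - (1 - p) & (a^-1 - 1) * (b^-1 - a^-1)^-1 = - (1 - q)].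
Proof.
have U1 : c^-1 - d^-1 \is a GRing.unit by apply: unit_subV.
have U2 : a^-1 - b^-1 \is a GRing.unit by apply: unit_subV.
have U3 : d^-1 - c^-1 \is a GRing.unit by apply: unit_subV; rewrite // -opprB unitrN.
have U4 : b^-1 - a^-1 \is a GRing.unit by apply: unit_subV; rewrite // -opprB unitrN.
rewrite /p /q; split.
- by nc_ring 3 6 inverting (Uc, Ud, Ud1, Udc, U1).
- by nc_ring 3 6 inverting (Ua, Ub, Ub1, Uba, U2).
- by nc_ring 3 6 inverting (Uc, Ud, Uc1, Ud1, Udc, U3).
- by nc_ring 3 6 inverting (Ua, Ub, Ua1, Ub1, Uba, U4).
Qed.

Hypothesis Hs : 1 - u - v \is a GRing.unit.

Lemma s_unit : s \is a GRing.unit.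
Proof.
have -> : s = - (1 - u - v) by rewrite /s; nc_ring 0 0.
by rewrite unitrN. Qed.

Lemma omega_unit : omega a b c d \is a GRing.unit.
Proof. by rewrite omega_eq unitrMl ?W_unit ?s_unit. Qed.

Lemma Phi_border_units : border_units a' b' c' d'.
Proof.
have [P1 P2 P3 P4] := Phi_entries; have Us := s_unit.
have UFa' := UFa; have UFb' := UFb; have UFc' := UFc; have UFd' := UFd.
have F x y : x \is a GRing.unit -> y \is a GRing.unit -> y - x \is a GRing.unit ->
    x^-1 * s - y^-1 * s \is a GRing.unit.
  by move=> Ux Uy Uyx; rewrite -mulrBl unitrMl // unit_subV.
have G x y : x \is a GRing.unit -> y \is a GRing.unit -> x - y \is a GRing.unit ->
    (1 - x^-1) - (1 - y^-1) \is a GRing.unit.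
  by move=> Ux Uy Uxy; rewrite opprB addrC addrA subrK unit_subV.
have sub1 (x y : R) : x - y = (x - 1) - (y - 1) by rewrite opprB addrA subrK.
split; rewrite ?(sub1 b' a') ?(sub1 d' c') ?(sub1 c' a') ?(sub1 d' b') ?P1 ?P2 ?P3 ?P4;
  rewrite ?unitrMl ?unitrV //; apply: F => //; exact: G.
Qed.

Lemma Phi_sub1_invertible : invertible2 (a' - 1) (b' - 1) (c' - 1) (d' - 1).
Proof.
have [P1 P2 P3 P4] := Phi_entries.
have U1 : (1 : R) \is a GRing.unit := unitr1 R.
have UN1 : (-1 : R) \is a GRing.unit by rewrite unitrN.
have [e [f [g [h /inverse2_swap_rows /inverse2_swap_cols Hi]]]] := HJ.
have /(invertible2_scale (And4 UN1 UN1 U1 U1)) :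
    invertible2 (d^-1 - 1) (b^-1 - 1) (c^-1 - 1) (a^-1 - 1).
  by do 4!eexists; exact: Hi.
rewrite !mulr1 !mulN1r !opprB -/Fa -/Fb -/Fc -/Fd.
case=> [e' [f' [g' [h' /(inverse2_J2 (And4 UFd UFb UFc UFa)) Hj]]]].
have /(invertible2_scale (And4 U1 U1 s_unit s_unit)) : invertible2 Fd^-1 Fc^-1 Fb^-1 Fa^-1.
  by do 4!eexists; exact: Hj.
by rewrite !mul1r P1 P2 P3 P4.
Qed.

Section PhiBlockInverse.
Variables h11 h12 h21 h22 : R.
Hypothesis Hh : inverse2 a' b' c' d' h11 h12 h21 h22.

Lemma Phi_row_sums : h11 + h12 = s^-1 * ut * s /\ h21 + h22 = s^-1 * vt * s.
Proof.
have [_ [H5 H6 H7 H8]] := Hh; have [K1 K2] := ut_vt_solve; have Us := s_unit.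
have [E1 E2 E3 E4] := Phi_entries.
move: H5 H6 H7 H8; rewrite -(subrK 1 a') -(subrK 1 b') -(subrK 1 c') -(subrK 1 d') E1 E2 E3 E4.
by move=> H5 H6 H7 H8; split;
  nc_ring 2 6 using (K1, K2, H5, H6, H7, H8) inverting Us.
Qed.

Lemma conj_by_omega x : (W * s)^-1 * x * (W * s) = s^-1 * (W^-1 * x * W) * s.
Proof. by rewrite invrM ?W_unit ?s_unit // !mulrA. Qed.

Lemma inv_mul_s x : x \is a GRing.unit -> (x^-1 * s)^-1 = s^-1 * x.
Proof. by move=> Ux; rewrite invrM ?invrK ?unitrV ?s_unit. Qed.

Lemma Phi2_entries :
  [/\ (omega a b c d)^-1 * ((d^-1 - 1) * (c^-1 - d^-1)^-1 * - y1^-1) * omega a b c d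
        = (d' - 1)^-1 * (c' - d') * - (h11 + h12),
      (omega a b c d)^-1 * ((c^-1 - 1) * (d^-1 - c^-1)^-1 * - y2^-1) * omega a b c d
        = (c' - 1)^-1 * (d' - c') * - (h21 + h22),
      (omega a b c d)^-1 * ((b^-1 - 1) * (a^-1 - b^-1)^-1 * - y1^-1) * omega a b c d
        = (b' - 1)^-1 * (a' - b') * - (h11 + h12)
    & (omega a b c d)^-1 * ((a^-1 - 1) * (b^-1 - a^-1)^-1 * - y2^-1) * omega a b c d
        = (a' - 1)^-1 * (b' - a') * - (h21 + h22)].
Proof.
have [P1 P2 P3 P4] := Phi_entries; have [L1 L2 L3 L4] := J2_ratios.
have [R1 R2] := Phi_row_sums; have [Y1 Y2] := J2_row_sums_inv.
have [W1 W2 W3 W4] := W_factor.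
have [q1 q2] := q_inv; have [p1 p2] := p_inv; have [q3 q4] := q1_inv; have [p3 p4] := p1_inv.
have UW := W_unit; have US1 := S1_unit; have US2 := S2_unit; have Us := s_unit.
have UFa' := UFa; have UFb' := UFb; have UFc' := UFc; have UFd' := UFd.
have eFa : Fa = 1 - a^-1 by []. have eFb : Fb = 1 - b^-1 by [].
have eFc : Fc = 1 - c^-1 by []. have eFd : Fd = 1 - d^-1 by [].
have sub1 (x y : R) : x - y = (x - 1) - (y - 1) by rewrite opprB addrA subrK.
rewrite omega_eq !conj_by_omega Y1 Y2 L1 L2 L3 L4 R1 R2.
rewrite (sub1 c' d') (sub1 d' c') (sub1 a' b') (sub1 b' a').
rewrite P1 P2 P3 P4 !inv_mul_s // /ut /vt; split.
- by nc_ring 3 6 using (W2, mulrV UW, mulVr UW, mulrV US1, mulVr US1, mulrV Us, mulVr Us,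
    q1, q2, mulrV UFa', mulVr UFa', mulrV UFb', mulVr UFb', eFa, eFc).
- by nc_ring 3 6 using (W3, mulrV UW, mulVr UW, mulrV US2, mulVr US2, mulrV Us, mulVr Us,
    q3, q4, mulrV UFa', mulVr UFa', mulrV UFb', mulVr UFb', eFb, eFd).
- by nc_ring 3 6 using (W1, mulrV UW, mulVr UW, mulrV US1, mulVr US1, mulrV Us, mulVr Us,
    p1, p2, mulrV UFc', mulVr UFc', mulrV UFd', mulVr UFd', eFa, eFc).
- by nc_ring 3 6 using (W4, mulrV UW, mulVr UW, mulrV US2, mulVr US2, mulrV Us, mulVr Us,
    p3, p4, mulrV UFc', mulVr UFc', mulrV UFd', mulVr UFd', eFb, eFd).
Qed.

End PhiBlockInverse.
End Identities.

Notation q0 := (@Ordinal 2 0 isT).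
Notation q1 := (@Ordinal 2 1 isT).

Lemma mulmx2E (R : pzRingType) (X Y : 'M[R]_2) i j :
  (X *m Y) i j = X i q0 * Y q0 j + X i q1 * Y q1 j.
Proof.
rewrite mxE !big_ord_recl big_ord0 addr0.
have -> : lift (ord0 : 'I_2) ord0 = q1 by exact/val_inj.
by have -> : (ord0 : 'I_2) = q0 by exact/val_inj.
Qed.

Lemma minv2_inverse2 (R : unitRingType) (A : 'M[R]_2) : mx_invertible A ->
  inverse2 (A q0 q0) (A q0 q1) (A q1 q0) (A q1 q1)
           (minv A q0 q0) (minv A q0 q1) (minv A q1 q0) (minv A q1 q1).
Proof.
move=> /minv_spec [H1 H2].
have e i j := congr1 (fun X : 'M[R]_2 => X i j) H1.
have f i j := congr1 (fun X : 'M[R]_2 => X i j) H2.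
move: (e q0 q0) (e q0 q1) (e q1 q0) (e q1 q1) (f q0 q0) (f q0 q1) (f q1 q0) (f q1 q1).
by rewrite /= !mulmx2E !mxE /= ?mulr1n ?mulr0n => *; split; split.
Qed.

Definition pick2 (i1 i2 : 'I_3) (k : 'I_2) : 'I_3 := if k == q0 then i1 else i2.

Lemma pick2_inj i1 i2 : i1 != i2 -> injective (pick2 i1 i2).
Proof.
move=> Hne k l; rewrite /pick2.
have Eq1 (m : 'I_2) : m != q0 -> m = q1 by case: m => [[|[|m]] Hm] // _; exact/val_inj.
case: (k =P q0) => [->|/eqP /Eq1 ->]; case: (l =P q0) => [->|/eqP /Eq1 ->] // E;
  by move: Hne; rewrite E eqxx.
Qed.

Definition minor2 (R : Type) (M : 'M[R]_3) r1 r2 c1 c2 : 'M[R]_2 :=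
  \matrix_(i, j) M (pick2 r1 r2 i) (pick2 c1 c2 j).

Section InS.
Variables (R : unitRingType) (M : 'M[R]_3).
Hypothesis HS : in_S M.

Lemma in_S_minor2 r1 r2 c1 c2 :
  r1 != r2 -> c1 != c2 -> mx_invertible (minor2 M r1 r2 c1 c2).
Proof. by case: HS => Hsub _ Hr Hc; apply: Hsub; apply: pick2_inj. Qed.

Lemma in_S_schur r1 r2 c1 c2 : r1 != r2 -> c1 != c2 -> M r1 c1 = 1 ->
  M r2 c2 - M r2 c1 * M r1 c2 \is a GRing.unit.
Proof.
move=> Hr Hc H1; have := minv2_inverse2 (in_S_minor2 Hr Hc).
rewrite !mxE /pick2 /= H1 => /inverse2_swap_rows /inverse2_swap_cols /inverse2_schur_unit.
by rewrite invr1 mulr1; apply; rewrite unitr1.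
Qed.

End InS.

Section InShat.
Variables (R : unitRingType) (a b c d : R).
Hypothesis HS : in_Shat (hatmx a b c d).
Local Notation A := (hatmx a b c d).

Let HSA : in_S A := HS.1.

Lemma in_Shat_units :
  [/\ a \is a GRing.unit, b \is a GRing.unit, c \is a GRing.unit & d \is a GRing.unit].
Proof.
have [_ [U _]] := HSA.
by split; [move: (U o1 o1) | move: (U o1 o2) | move: (U o2 o1) | move: (U o2 o2)]; rewrite mxE.
Qed.

Lemma in_Shat_border : border_units a b c d.
Proof.
have S := @in_S_schur R A HSA.
split; [ have := S o0 o1 o0 o1 isT isT | have := S o0 o1 o0 o2 isT isT
       | have := S o0 o2 o0 o1 isT isT | have := S o0 o2 o0 o2 isT isT
       | have := S o0 o1 o1 o2 isT isT | have := S o0 o2 o1 o2 isT isT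
       | have := S o1 o2 o0 o1 isT isT | have := S o1 o2 o0 o2 isT isT ];
  by rewrite !mxE /= ?mulr1 ?mul1r; apply.
Qed.

Let g := minv (minor2 A o1 o2 o1 o2).

Lemma in_Shat_block : inverse2 a b c d (g q0 q0) (g q0 q1) (g q1 q0) (g q1 q1).
Proof.
have := in_S_minor2 HSA (r1 := o1) (r2 := o2) (c1 := o1) (c2 := o2) isT isT.
by move/minv2_inverse2; rewrite !mxE.
Qed.

Lemma in_Shat_invertible : mx_invertible A.
Proof.
have [Hsub _] := HSA; have := Hsub 3 id id (@inj_id _) (@inj_id _).
by have -> : \matrix_(i, j) A (id i) (id j) = A by apply/matrixP => i j; rewrite mxE.
Qed.

Let M := minv A.
Let u := g q0 q0 + g q0 q1.
Let v := g q1 q0 + g q1 q1.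

Lemma in_Shat_inv : A *m M = 1%:M /\ M *m A = 1%:M.
Proof. exact/minv_spec/in_Shat_invertible. Qed.

Lemma in_Shat_corner_unit : 1 - u - v \is a GRing.unit.
Proof.
have [H1 H2] := in_Shat_inv.
by have [E1 E2] := hatmx_inv00 H1 H2 in_Shat_block; apply/unitrP; exists (M o0 o0).
Qed.

Lemma in_Shat_J2 : J2 A = hatmx a^-1 c^-1 b^-1 d^-1.
Proof. exact/J2_hatmx/in_Shat_units. Qed.

Lemma in_Shat_J2_border : border_units a^-1 c^-1 b^-1 d^-1.
Proof.
have [Ua Ub Uc Ud] := in_Shat_units.
have [Ua1 Ub1 Uc1 Ud1 Uba Udc Uca Udb] := in_Shat_border.
have V1 x : x \is a GRing.unit -> x - 1 \is a GRing.unit -> x^-1 - 1 \is a GRing.unit.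
  by move=> Ux Ux1; rewrite -opprB unitrN unit_1BV.
have N x y : x - y \is a GRing.unit -> y - x \is a GRing.unit by rewrite -opprB unitrN.
by split; rewrite ?V1 // unit_subV // N.
Qed.

Let C := minv (J2 A).

Lemma in_Shat_J2_inv :
  hatmx a^-1 c^-1 b^-1 d^-1 *m C = 1%:M /\ C *m hatmx a^-1 c^-1 b^-1 d^-1 = 1%:M.
Proof. by rewrite -in_Shat_J2; apply: minv_spec; case: HSA => _ []. Qed.

Lemma in_Shat_J2_block_invertible : invertible2 (a^-1 - 1) (c^-1 - 1) (b^-1 - 1) (d^-1 - 1).
Proof. by have [H1 H2] := in_Shat_J2_inv; do 4!eexists; exact: hatmx_inv_block H1 H2. Qed.

Let a' := (d - 1)^-1 * (c - d) * - u.
Let b' := (c - 1)^-1 * (d - c) * - v.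
Let c' := (b - 1)^-1 * (a - b) * - u.
Let d' := (a - 1)^-1 * (b - a) * - v.

Lemma Phi_in_Shat : Phi A = hatmx a' b' c' d'.
Proof.
have [H1 H2] := in_Shat_inv.
by rewrite /Phi -/M (J2_LambdaL_hatmx_inv H1 H2 in_Shat_block in_Shat_border).
Qed.

Lemma Phi_in_Shat_invertible : mx_invertible (hatmx a' b' c' d').
Proof.
have [Ua Ub Uc Ud] := in_Shat_units.
exact/hatmx_invertible/(Phi_sub1_invertible Ua Ub Uc Ud in_Shat_border in_Shat_block
  in_Shat_J2_block_invertible in_Shat_corner_unit).
Qed.

Lemma in_Shat_uv_units : - u \is a GRing.unit /\ - v \is a GRing.unit.
Proof.
have [H1 H2] := in_Shat_inv; have U := hatmx_inv_units H1 H2 in_Shat_block in_Shat_border.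
have [E10 E20] := hatmx_inv_col0_u H1 in_Shat_block.
by split; [have := U o1 o0; rewrite E10 | have := U o2 o0; rewrite E20]; rewrite unitrMl ?U.
Qed.

(* The lower right block of [Phi A] is [J2] of that of [M], scaled by units. *)
Lemma Phi_in_Shat_block_invertible : invertible2 a' b' c' d'.
Proof.
have [H1 H2] := in_Shat_inv; have Hb := in_Shat_border; have [Uu Uv] := in_Shat_uv_units.
have U := hatmx_inv_units H1 H2 in_Shat_block Hb.
have [U11 U12 U21 U22] := hatmx_inv_block_units H1 H2 Hb.
have Hj := inverse2_J2 (And4 U11 U12 U21 U22) (inverse2_sym (hatmx_inv_block H1 H2)).
have /(invertible2_scale (And4 (U o0 o1) (U o0 o2) Uu Uv)) :
    invertible2 (M o1 o1)^-1 (M o2 o1)^-1 (M o1 o2)^-1 (M o2 o2)^-1.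
  by do 4!eexists; exact: Hj.
by have [E11 E21 E12 E22] := hatmx_inv_ratios H1 H2 Hb; rewrite E11 E21 E12 E22.
Qed.

Lemma Phi_in_Shat_border : border_units a' b' c' d'.
Proof.
have [Ua Ub Uc Ud] := in_Shat_units.
exact: Phi_border_units Ua Ub Uc Ud in_Shat_border in_Shat_block in_Shat_corner_unit.
Qed.

Lemma in_Shat_J2_block : inverse2 a^-1 c^-1 b^-1 d^-1
  (- (b * g q1 q1 * c)) (b * g q1 q1 * d) (d * g q1 q1 * c) (d - d * g q1 q1 * d).
Proof. exact: inverse2_J2 in_Shat_units in_Shat_block. Qed.

Lemma domPhi_in_Shat : domPhi A.
Proof.
have [H1 H2] := in_Shat_inv; have [_ [UA _]] := HSA.
split; last by split; [exact: is_hat_hatmx | exact: UA].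
split; first exact: in_Shat_invertible.
by move=> j k; apply: (hatmx_inv_units H1 H2 in_Shat_block in_Shat_border).
Qed.

Lemma domPhiinv_in_Shat : domPhiinv A.
Proof.
have [H1 H2] := in_Shat_J2_inv; have [_ [UA HJ2]] := HSA.
split; first by split.
by move=> j k; apply: (hatmx_inv_units H1 H2 in_Shat_J2_block in_Shat_J2_border).
Qed.

Lemma domPhi_Phi_in_Shat : domPhi (Phi A).
Proof.
have [Ua1 Ub1 Uc1 Ud1 Uba Udc Uca Udb] := in_Shat_border.
have [Uu Uv] := in_Shat_uv_units.
have Ucd : c - d \is a GRing.unit by rewrite -opprB unitrN.
have Uab : a - b \is a GRing.unit by rewrite -opprB unitrN.
rewrite Phi_in_Shat; split; last split; first split.
- exact: Phi_in_Shat_invertible.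
- have [h11 [h12 [h21 [h22 Hh]]]] := Phi_in_Shat_block_invertible.
  have [H1' H2'] := minv_spec Phi_in_Shat_invertible.
  by move=> j k; apply: (hatmx_inv_units H1' H2' Hh Phi_in_Shat_border).
- exact: is_hat_hatmx.
apply: ord3P; apply: ord3P; rewrite mxE /= ?unitr1 //;
  by rewrite /a' /b' /c' /d' !unitrMl ?unitrV.
Qed.

Lemma Phi2_in_Shat : Phi (Phi A) = conj_by (omega a b c d) (Phiinv A).
Proof.
have [Ua Ub Uc Ud] := in_Shat_units.
have [h11 [h12 [h21 [h22 Hh]]]] := Phi_in_Shat_block_invertible.
have [H1 H2] := minv_spec Phi_in_Shat_invertible.
have [C1 C2] := in_Shat_J2_inv.
have Uw := omega_unit Ua Ub Uc Ud in_Shat_border in_Shat_block in_Shat_J2_block_invertible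
  in_Shat_corner_unit.
have [F11 F12 F21 F22] := Phi2_entries Ua Ub Uc Ud in_Shat_border in_Shat_block
  in_Shat_J2_block_invertible in_Shat_corner_unit Hh.
rewrite Phi_in_Shat /Phi (J2_LambdaL_hatmx_inv H1 H2 Hh Phi_in_Shat_border).
rewrite /Phiinv /Jinv -/C (LambdaR_hatmx_inv C1 C2 in_Shat_J2_block in_Shat_J2_border).
apply/matrixP => j k; rewrite !mxE.
by move: j k; apply: ord3P; apply: ord3P => /=; rewrite ?mulr1 ?mulVr.
Qed.

Lemma omega_in_Shat_unit : omega a b c d \is a GRing.unit.
Proof.
have [Ua Ub Uc Ud] := in_Shat_units.
exact: omega_unit Ua Ub Uc Ud in_Shat_border in_Shat_block in_Shat_J2_block_invertible
  in_Shat_corner_unit.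
Qed.

End InShat.

Unset Implicit Arguments.

Theorem theorem4 (R : unitRingType) (a b c d : R) :
  in_Shat (hatmx a b c d) ->
  [/\ domPhi (hatmx a b c d), domPhi (Phi (hatmx a b c d)),
      domPhiinv (hatmx a b c d),
      omega a b c d \is a GRing.unit
    & Phi (Phi (hatmx a b c d)) = conj_by (omega a b c d) (Phiinv (hatmx a b c d))].
Proof.
move=> HS; split.
- exact: domPhi_in_Shat.
- exact: domPhi_Phi_in_Shat.
- exact: domPhiinv_in_Shat.
- exact: omega_in_Shat_unit.
- exact: Phi2_in_Shat.
Qed.
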